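(* Let $S=\{l_1=w_1,\dots,l_m=w_m\}$ with $l_1,\dots,l_m$ literals and $w_1,\dots,w_m\ge 0$ reals, and let $N$ be a real. Then $[N\le S]$ is strongly equivalent to the aggregate $sum\langle S\rangle\ge N$, and $[S\le N]$ is strongly equivalent to the aggregate $sum\langle S\rangle\le N$.
   Context: A literal is an atom $a$ or $\neg a$. Formulas with aggregates: atoms and $\bot$; combinations by $\wedge,\vee,\to$ ($\neg F:=F\to\bot$, $\top:=\bot\to\bot$; empty conjunction $\top$, empty disjunction $\bot$); and aggregates $op\langle\{F_1=w_1,\dots,F_n=w_n\}\rangle\prec N$; here $op=sum$. $X$ satisfies the aggregate iff $op(W_X)\prec N$, $W_X$ the multiset of $w_i$ with $X\models F_i$. Reduct: $\bot^X=\bot$; $a^X=a$ if $a\in X$, else $\bot$; $(F\otimes G)^X=F^X\otimes G^X$ if $X\models F\otimes G$, else $\bot$; for an aggregate $A$, $A^X=op\langle\{F_1^X=w_1,\dots\}\rangle\prec N$ if $X\models A$, else $\bot$. $X$ is a stable model of a theory $\Gamma$ if $X\models\Gamma^X$ and no proper subset of $X$ satisfies $\Gamma^X$; two formulas are strongly equivalent if adding either to any theory gives the same stable models. The translations of weight constraints into nested expressions are $$[N\le S]=\bigvee_{I\subseteq\{1,\dots,m\}:\,N\le\sum_{i\in I}w_i}\ \bigwedge_{i\in I}l_i,\qquad [S\le N]=\neg\bigvee_{I\subseteq\{1,\dots,m\}:\,N<\sum_{i\in I}w_i}\ \bigwedge_{i\in I}l_i.$$ *)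

From Stdlib Require Import Reals List.
Import ListNotations.
Open Scope R_scope.
Set Implicit Arguments.

Inductive cmp := CLt | CLe | CEq | CNe | CGe | CGt.

Definition cmpb (c : cmp) (x y : R) : bool :=
  match c with
  | CLt => if Rlt_dec x y then true else false
  | CLe => if Rle_dec x y then true else false
  | CEq => if Req_EM_T x y then true else false
  | CNe => if Req_EM_T x y then false else true
  | CGe => if Rge_dec x y then true else false
  | CGt => if Rgt_dec x y then true else false
  end.

Inductive form (A : Type) : Type :=
| FAtom : A -> form A
| FBot : form A
| FAnd : form A -> form A -> form A
| FOr : form A -> form A -> form A
| FImp : form A -> form A -> form A
| FSum : list (form A * R) -> cmp -> R -> form A.  (* sum<{F1=w1,..}> prec N *)

Arguments FBot {A}.

Definition FNot {A} (F : form A) : form A := FImp F FBot.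
Definition FTop {A} : form A := FImp FBot FBot.

Definition interp (A : Type) := A -> bool.

Fixpoint sat {A} (X : interp A) (F : form A) : bool :=
  match F with
  | FAtom a => X a
  | FBot => false
  | FAnd F G => sat X F && sat X G
  | FOr F G => sat X F || sat X G
  | FImp F G => negb (sat X F) || sat X G
  | FSum l c N =>
      cmpb c ((fix sumw (l : list (form A * R)) : R :=
                 match l with
                 | [] => 0
                 | (G, w) :: t => (if sat X G then w else 0) + sumw t
                 end) l) N
  end.

Fixpoint reduct {A} (X : interp A) (F : form A) : form A :=
  match F with
  | FAtom a => if X a then FAtom a else FBot
  | FBot => FBot
  | FAnd F1 F2 => if sat X (FAnd F1 F2) then FAnd (reduct X F1) (reduct X F2) else FBot
  | FOr F1 F2 => if sat X (FOr F1 F2) then FOr (reduct X F1) (reduct X F2) else FBot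
  | FImp F1 F2 => if sat X (FImp F1 F2) then FImp (reduct X F1) (reduct X F2) else FBot
  | FSum l c N =>
      if sat X (FSum l c N)
      then FSum ((fix redl (l : list (form A * R)) : list (form A * R) :=
                    match l with
                    | [] => []
                    | (G, w) :: t => (reduct X G, w) :: redl t
                    end) l) c N
      else FBot
  end.

Definition theory (A : Type) := form A -> Prop.

Definition sat_th {A} (Y : interp A) (T : theory A) : Prop :=
  forall F, T F -> sat Y F = true.

Definition reduct_th {A} (X : interp A) (T : theory A) : theory A :=
  fun G => exists F, T F /\ G = reduct X F.

Definition proper_subset {A} (Y X : interp A) : Prop :=
  (forall a, Y a = true -> X a = true) /\ (exists a, X a = true /\ Y a = false).

Definition stable_model {A} (T : theory A) (X : interp A) : Prop :=
  sat_th X (reduct_th X T) /\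
  forall Y, proper_subset Y X -> ~ sat_th Y (reduct_th X T).

Definition add_form {A} (T : theory A) (F : form A) : theory A :=
  fun G => T G \/ G = F.

Definition strongly_equivalent {A} (F G : form A) : Prop :=
  forall (T : theory A) (X : interp A),
    stable_model (add_form T F) X <-> stable_model (add_form T G) X.

Inductive literal (A : Type) := Pos : A -> literal A | Neg : A -> literal A.

Definition lit_form {A} (l : literal A) : form A :=
  match l with Pos a => FAtom a | Neg a => FNot (FAtom a) end.

Definition wlist (A : Type) := list (literal A * R).

(* All sub-multisets, i.e. sublists indexed by subsets I of {1..m}. *)
Fixpoint sublists {T} (s : list T) : list (list T) :=
  match s with
  | [] => [[]]
  | x :: t => map (cons x) (sublists t) ++ sublists t
  end.

Definition sumw {A} (I : wlist A) : R := fold_right (fun p acc => snd p + acc) 0 I.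

Definition bigAnd {A} (l : list (form A)) : form A := fold_right (@FAnd A) FTop l.
Definition bigOr {A} (l : list (form A)) : form A := fold_right (@FOr A) FBot l.

Definition conj_of {A} (I : wlist A) : form A := bigAnd (map (fun p => lit_form (fst p)) I).

Definition wc_lower {A} (N : R) (S : wlist A) : form A :=
  bigOr (map conj_of
    (filter (fun I => if Rle_dec N (sumw I) then true else false) (sublists S))).

Definition wc_upper {A} (S : wlist A) (N : R) : form A :=
  FNot (bigOr (map conj_of
    (filter (fun I => if Rlt_dec N (sumw I) then true else false) (sublists S)))).

Definition sum_agg {A} (S : wlist A) (c : cmp) (N : R) : form A :=
  FSum (map (fun p => (lit_form (fst p), snd p)) S) c N.

From Stdlib Require Import Reals List Lra Bool.
Import ListNotations.
Open Scope R_scope.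

(* Strong equivalence is reduced to here-and-there semantics: writing
   ht Y X F for "Y satisfies the reduct F^X", two formulas are strongly
   equivalent as soon as ht Y X F = ht Y X G for all Y included in X
   (Lemma [strongly_equivalent_of_ht]).  A literal evaluates to
   [litval Y X l] (a positive literal is read in Y, a negative one in X), so
   the aggregate becomes "X satisfies sum<S> prec N, and the sum of the
   weights of the literals true in (Y, X) is prec N", while the disjunction of
   conjunctions over heavy subsets becomes "some subset of the literals true
   in (Y, X) is heavy", i.e. (weights being nonnegative) "the whole set of
   literals true in (Y, X) is heavy" (Lemma [heavy_sublist_iff]).  Since
   [litval Y X] is below [litval X X], the two computations agree. *)

Section HereAndThere.
Context {A : Type}.

Definition subi (Y X : interp A) : Prop := forall a, Y a = true -> X a = true.

Lemma subi_refl (X : interp A) : subi X X.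
Proof. intros a Ha; exact Ha. Qed.

Definition ht (Y X : interp A) (F : form A) : bool := sat Y (reduct X F).

(* The weighted sum and the list reduct that [sat] and [reduct] compute
   internally on aggregate elements. *)
Fixpoint sumf (Y : interp A) (l : list (form A * R)) : R :=
  match l with [] => 0 | (G, w) :: t => (if sat Y G then w else 0) + sumf Y t end.

Fixpoint redl (X : interp A) (l : list (form A * R)) : list (form A * R) :=
  match l with [] => [] | (G, w) :: t => (reduct X G, w) :: redl X t end.

Lemma sat_FSum (Y : interp A) l c N : sat Y (FSum l c N) = cmpb c (sumf Y l) N.
Proof.
  simpl; f_equal.
  induction l as [|[G w] t IH]; simpl; [reflexivity|]. now rewrite IH.
Qed.

Lemma reduct_FSum (X : interp A) l c N :
  reduct X (FSum l c N) = if sat X (FSum l c N) then FSum (redl X l) c N else FBot.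
Proof.
  simpl; destruct (cmpb _ _ _); [f_equal|reflexivity].
  induction l as [|[G w] t IH]; simpl; [reflexivity|]. now rewrite IH.
Qed.

(* The reduct F^X is satisfied by X exactly when F is.  The aggregate case
   needs the induction hypothesis on the elements of the aggregate, hence the
   explicit (nested) fixpoint. *)
Lemma ht_self (X : interp A) (F : form A) : ht X X F = sat X F.
Proof.
  unfold ht; revert F; fix IH 1; intros [a| |F1 F2|F1 F2|F1 F2|l c N].
  - simpl; now destruct (X a) eqn:E; simpl; rewrite ?E.
  - reflexivity.
  - simpl; destruct (sat X F1) eqn:E1, (sat X F2) eqn:E2; simpl;
      rewrite ?IH, ?E1, ?E2; reflexivity.
  - simpl; destruct (sat X F1) eqn:E1, (sat X F2) eqn:E2; simpl;
      rewrite ?IH, ?E1, ?E2; reflexivity.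
  - simpl; destruct (sat X F1) eqn:E1, (sat X F2) eqn:E2; simpl;
      rewrite ?IH, ?E1, ?E2; reflexivity.
  - rewrite reduct_FSum; destruct (sat X (FSum l c N)) eqn:E; [|reflexivity].
    rewrite <- E, !sat_FSum; f_equal; clear E.
    induction l as [|[G w] t IHt]; simpl; [reflexivity|]. now rewrite IH, IHt.
Qed.

Lemma ht_persistent (Y X : interp A) (F : form A) :
  subi Y X -> ht Y X F = true -> sat X F = true.
Proof.
  intros HYX; unfold ht; destruct F; simpl.
  - destruct (X a) eqn:E; simpl; [reflexivity|discriminate].
  - discriminate.
  - destruct (sat X F1 && sat X F2); [reflexivity|discriminate].
  - destruct (sat X F1 || sat X F2); [reflexivity|discriminate].
  - destruct (negb (sat X F1) || sat X F2); [reflexivity|discriminate].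
  - match goal with |- context [if ?b then _ else _] => destruct b end;
      [reflexivity|discriminate].
Qed.

Lemma ht_false (Y X : interp A) (F : form A) :
  subi Y X -> sat X F = false -> ht Y X F = false.
Proof.
  intros HYX HX; destruct (ht Y X F) eqn:E; [|reflexivity].
  apply (ht_persistent Y X F HYX) in E; congruence.
Qed.

Lemma ht_and (Y X : interp A) (F G : form A) :
  subi Y X -> ht Y X (FAnd F G) = ht Y X F && ht Y X G.
Proof.
  intros HYX; unfold ht at 1; simpl.
  destruct (sat X F) eqn:EF; [destruct (sat X G) eqn:EG; [reflexivity|]|];
    simpl; [now rewrite (ht_false Y X G), andb_false_r|now rewrite (ht_false Y X F)].
Qed.

Lemma ht_or (Y X : interp A) (F G : form A) :
  subi Y X -> ht Y X (FOr F G) = ht Y X F || ht Y X G.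
Proof.
  intros HYX; unfold ht at 1; simpl.
  destruct (sat X F) eqn:EF, (sat X G) eqn:EG; simpl; try reflexivity.
  now rewrite (ht_false Y X F), (ht_false Y X G).
Qed.

Lemma ht_not (Y X : interp A) (F : form A) :
  subi Y X -> ht Y X (FNot F) = negb (sat X F).
Proof.
  intros HYX; unfold ht, FNot; simpl.
  destruct (sat X F) eqn:EF; simpl; [reflexivity|].
  fold (ht Y X F); now rewrite ht_false.
Qed.

Lemma ht_bigOr (Y X : interp A) (l : list (form A)) :
  subi Y X -> ht Y X (bigOr l) = existsb (ht Y X) l.
Proof.
  intros HYX; induction l as [|F l IH]; [reflexivity|].
  change (bigOr (F :: l)) with (FOr F (bigOr l)); now rewrite ht_or, IH.
Qed.

Definition litval (Y X : interp A) (l : literal A) : bool :=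
  match l with Pos a => Y a | Neg a => negb (X a) end.

Lemma ht_lit (Y X : interp A) (l : literal A) :
  subi Y X -> ht Y X (lit_form l) = litval Y X l.
Proof.
  intros HYX; unfold ht; destruct l as [a|a]; simpl.
  - destruct (X a) eqn:E; simpl; [reflexivity|].
    destruct (Y a) eqn:EY; [apply HYX in EY; congruence|reflexivity].
  - now destruct (X a).
Qed.

Lemma sat_lit (X : interp A) (l : literal A) : sat X (lit_form l) = litval X X l.
Proof. rewrite <- ht_self; now apply ht_lit. Qed.

Lemma litval_incl (Y X : interp A) (l : literal A) :
  subi Y X -> litval Y X l = true -> litval X X l = true.
Proof. intros HYX; destruct l; simpl; auto. Qed.

Lemma ht_conj (Y X : interp A) (I : wlist A) :
  subi Y X -> ht Y X (conj_of I) = forallb (fun p => litval Y X (fst p)) I.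
Proof.
  intros HYX; induction I as [|p I IH]; [reflexivity|].
  change (conj_of (p :: I)) with (FAnd (lit_form (fst p)) (conj_of I)).
  now rewrite ht_and, ht_lit, IH.
Qed.

Definition wsum (v : literal A -> bool) (S : wlist A) : R :=
  fold_right (fun p acc => (if v (fst p) then snd p else 0) + acc) 0 S.

Lemma sumf_lits (Y : interp A) (f : literal A -> form A) (v : literal A -> bool)
  (S : wlist A) :
  (forall l, sat Y (f l) = v l) ->
  sumf Y (map (fun p => (f (fst p), snd p)) S) = wsum v S.
Proof.
  intros Hv; induction S as [|p S IH]; simpl; [reflexivity|]. now rewrite Hv, IH.
Qed.

Lemma sat_sum_agg (X : interp A) (S : wlist A) c N :
  sat X (sum_agg S c N) = cmpb c (wsum (litval X X) S) N.
Proof. unfold sum_agg; rewrite sat_FSum, (sumf_lits _ _ (litval X X)); auto using sat_lit. Qed.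

Lemma ht_sum_agg (Y X : interp A) (S : wlist A) c N :
  subi Y X ->
  ht Y X (sum_agg S c N) = sat X (sum_agg S c N) && cmpb c (wsum (litval Y X) S) N.
Proof.
  intros HYX; unfold ht, sum_agg at 1; rewrite reduct_FSum; fold (sum_agg S c N).
  destruct (sat X (sum_agg S c N)); [|reflexivity].
  rewrite sat_FSum; simpl; f_equal.
  induction S as [|p S IH]; simpl; [reflexivity|].
  fold (ht Y X (lit_form (fst p))); now rewrite ht_lit, IH.
Qed.

Lemma stable_model_transfer (F G : form A) :
  (forall X Y, subi Y X -> ht Y X F = ht Y X G) ->
  forall T X, stable_model (add_form T F) X -> stable_model (add_form T G) X.
Proof.
  intros Hht T X [Hsat Hmin]; split.
  - intros F' [F0 [[HT| ->] ->]].
    + apply Hsat; exists F0; split; [left|]; auto.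
    + fold (ht X X G); rewrite <- (Hht X X (subi_refl X)).
      apply Hsat; exists F; split; [right|]; auto.
  - intros Y HY HYsat; apply (Hmin Y HY).
    intros F' [F0 [[HT| ->] ->]].
    + apply HYsat; exists F0; split; [left|]; auto.
    + fold (ht Y X F); rewrite (Hht X Y (proj1 HY)).
      apply HYsat; exists G; split; [right|]; auto.
Qed.

Lemma strongly_equivalent_of_ht (F G : form A) :
  (forall X Y, subi Y X -> ht Y X F = ht Y X G) -> strongly_equivalent F G.
Proof.
  intros Hht T X; split; apply stable_model_transfer; [assumption|].
  intros; symmetry; auto.
Qed.

End HereAndThere.

Section Weights.
Context {A : Type}.
Variable S : wlist A.
Hypothesis Hw : forall p, In p S -> 0 <= snd p.

Lemma wsum_mono (v1 v2 : literal A -> bool) :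
  (forall l, v1 l = true -> v2 l = true) -> wsum v1 S <= wsum v2 S.
Proof.
  intros Hv; induction S as [|p S' IH]; simpl; [lra|].
  assert (0 <= snd p) by (apply Hw; left; reflexivity).
  assert (wsum v1 S' <= wsum v2 S') by (apply IH; intros; apply Hw; right; auto).
  destruct (v1 (fst p)) eqn:E1; [rewrite (Hv _ E1)|destruct (v2 (fst p))]; lra.
Qed.

Lemma sumw_selected_le (v : literal A -> bool) (I : wlist A) :
  In I (sublists S) -> forallb (fun p => v (fst p)) I = true -> sumw I <= wsum v S.
Proof.
  revert I; induction S as [|p S' IH]; intros I HI Hv.
  - destruct HI as [<-|[]]; simpl; lra.
  - assert (0 <= snd p) by (apply Hw; left; reflexivity).
    assert (IH' := IH (fun q Hq => Hw q (or_intror Hq))).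
    apply in_app_or in HI; destruct HI as [HI|HI].
    + apply in_map_iff in HI; destruct HI as [I' [<- HI']].
      simpl in Hv; apply andb_true_iff in Hv; destruct Hv as [Hp HvI'].
      specialize (IH' I' HI' HvI'); unfold sumw in *; simpl; rewrite Hp; lra.
    + specialize (IH' I HI Hv); simpl; destruct (v (fst p)); lra.
Qed.

End Weights.

Lemma selected_sublist {A} (v : literal A -> bool) (S : wlist A) :
  let J := filter (fun p => v (fst p)) S in
  In J (sublists S) /\ forallb (fun p => v (fst p)) J = true /\ sumw J = wsum v S.
Proof.
  induction S as [|p S [HJ [Hv Hs]]]; simpl; [auto|].
  destruct (v (fst p)) eqn:E; simpl.
  - split; [apply in_or_app; left; now apply in_map|].
    rewrite E, Hv; split; [reflexivity|]. unfold sumw in *; simpl; now rewrite Hs.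
  - split; [apply in_or_app; now right|]. split; [assumption|]. rewrite Hs; lra.
Qed.

Lemma heavy_sublist_iff {A} (S : wlist A) (P : R -> bool) (v : literal A -> bool) :
  (forall p, In p S -> 0 <= snd p) ->
  (forall x y, P x = true -> x <= y -> P y = true) ->
  (exists I, In I (sublists S) /\ forallb (fun p => v (fst p)) I = true /\
             P (sumw I) = true) <-> P (wsum v S) = true.
Proof.
  intros Hw HP; split.
  - intros [I [HI [Hv HPI]]]. apply (HP _ _ HPI). now apply sumw_selected_le.
  - intros HPS; destruct (selected_sublist v S) as [HJ [Hv Hs]].
    eexists; split; [exact HJ|]. split; [exact Hv|]. now rewrite Hs.
Qed.

Definition weight_disj {A} (P : R -> bool) (S : wlist A) : form A :=
  bigOr (map conj_of (filter (fun I => P (sumw I)) (sublists S))).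

Lemma ht_weight_disj {A} (Y X : interp A) (P : R -> bool) (S : wlist A) :
  subi Y X -> (forall p, In p S -> 0 <= snd p) ->
  (forall x y, P x = true -> x <= y -> P y = true) ->
  ht Y X (weight_disj P S) = P (wsum (litval Y X) S).
Proof.
  intros HYX Hw HP; apply eq_iff_eq_true.
  rewrite <- heavy_sublist_iff by assumption.
  unfold weight_disj; rewrite ht_bigOr, existsb_exists by assumption; split.
  - intros [F [HF HFt]]; apply in_map_iff in HF; destruct HF as [I [<- HI]].
    apply filter_In in HI; rewrite ht_conj in HFt by assumption.
    exists I; tauto.
  - intros [I [HI [Hv HPI]]]; exists (conj_of I); split.
    + apply in_map, filter_In; auto.
    + now rewrite ht_conj.
Qed.

Definition geb (N x : R) : bool := if Rle_dec N x then true else false.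
Definition gtb (N x : R) : bool := if Rlt_dec N x then true else false.

Lemma geb_upward N x y : geb N x = true -> x <= y -> geb N y = true.
Proof. unfold geb; destruct (Rle_dec N x), (Rle_dec N y); auto; lra. Qed.

Lemma gtb_upward N x y : gtb N x = true -> x <= y -> gtb N y = true.
Proof. unfold gtb; destruct (Rlt_dec N x), (Rlt_dec N y); auto; lra. Qed.

Theorem proposition17 (A : Type) (S : wlist A) (N : R)
  (Hw : forall p, In p S -> 0 <= snd p) :
  strongly_equivalent (wc_lower N S) (sum_agg S CGe N) /\
  strongly_equivalent (wc_upper S N) (sum_agg S CLe N).
Proof.
  split; apply strongly_equivalent_of_ht; intros X Y HYX;
    rewrite ht_sum_agg, sat_sum_agg by exact HYX;
    assert (Hle := wsum_mono S Hw _ _ (fun l => litval_incl Y X l HYX));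
    simpl cmpb.
  - change (wc_lower N S) with (weight_disj (geb N) S).
    rewrite (ht_weight_disj Y X (geb N) S HYX Hw (geb_upward N)); unfold geb.
    repeat destruct (Rle_dec _ _); repeat destruct (Rge_dec _ _); auto; lra.
  - change (wc_upper S N) with (FNot (weight_disj (gtb N) S)).
    rewrite ht_not, <- ht_self by exact HYX.
    rewrite (ht_weight_disj X X (gtb N) S (subi_refl X) Hw (gtb_upward N)); unfold gtb.
    repeat destruct (Rle_dec _ _); repeat destruct (Rlt_dec _ _); auto; lra.
Qed.
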